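(* Let $Q:\mathcal S\times\mathcal A\to\mathbb R$ be arbitrary and let $\pi_Q$ be a deterministic policy with $\pi_Q(s)\in\arg\max_aQ(s,a)$. Then $$\mathbb E_{s_0\sim\rho}\big(V^\star(s_0)-V^{\pi_Q}(s_0)\big)\le\mathbb E\Big[\sum_{t=0}^\infty\gamma^t\Big((Q^\star-Q)(s_t,\pi^\star(s_t))+(Q-Q^\star)(s_t,\pi_Q(s_t))\Big)\Big],$$ where the expectation is over $s_0\sim\rho$, $a_\tau=\pi_Q(s_\tau)$, $s_{\tau+1}\sim\hat P^{\pi_Q}_{s_\tau,a_\tau}$ with $\hat P^{\pi_Q}(s'|s,a)\propto P(s'|s,a)e^{-\beta V^{\pi_Q}(s')}$, and $\pi^\star(s)\in\arg\max_aQ^\star(s,a)$.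
   Context: $\mathcal S,\mathcal A$ finite; $P=\{P_{s,a}\}$ a transition kernel with $P_{s,a}$ a probability distribution on $\mathcal S$; $r:\mathcal S\times\mathcal A\to[0,1]$; $\gamma\in[0,1)$; $\rho$ a distribution on $\mathcal S$; $\beta>0$. For a policy $\pi$ (map from states to distributions on $\mathcal A$; a deterministic policy is identified with the chosen action $\pi(s)$), $V^\pi,Q^\pi$ are the unique solutions of $V^\pi(s)=\sum_a\pi(a|s)Q^\pi(s,a)$, $Q^\pi(s,a)=r(s,a)-\gamma\beta^{-1}\log\mathbb E_{s'\sim P_{s,a}}e^{-\beta V^\pi(s')}$, and $V^\star,Q^\star$ the unique solutions of $V^\star(s)=\max_aQ^\star(s,a)$, $Q^\star(s,a)=r(s,a)-\gamma\beta^{-1}\log\mathbb E_{s'\sim P_{s,a}}e^{-\beta V^\star(s')}$ (these are the risk-sensitive values for the entropic risk measure, equivalently KL-regularized robust values with penalty $\beta^{-1}\mathrm{KL}$). *)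

From mathcomp Require Import all_boot all_order all_algebra.
From mathcomp Require Import all_classical all_reals all_analysis.
Set Implicit Arguments. Unset Strict Implicit. Unset Printing Implicit Defensive.
Import Order.TTheory GRing.Theory Num.Theory.
Local Open Scope ring_scope.

Section Defs.
Context {R : realType} {S A : finType}.

(* P s a s' = P(s'|s,a) is a transition kernel *)
Definition is_kernel (P : S -> A -> S -> R) : Prop :=
  (forall s a s', 0 <= P s a s') /\ (forall s a, \sum_(s' : S) P s a s' = 1).

Definition is_dist (rho : S -> R) : Prop :=
  (forall s, 0 <= rho s) /\ \sum_(s : S) rho s = 1.

Definition soft_Q (P : S -> A -> S -> R) (r : S -> A -> R) (gamma beta : R)
  (V : S -> R) (s : S) (a : A) : R :=
  r s a - gamma * beta^-1 * ln (\sum_(s' : S) P s a s' * expR (- (beta * V s'))).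

Definition is_policy_values (P : S -> A -> S -> R) (r : S -> A -> R) (gamma beta : R)
  (pi : S -> A) (V : S -> R) (Q : S -> A -> R) : Prop :=
  (forall s, V s = Q s (pi s)) /\ (forall s a, Q s a = soft_Q P r gamma beta V s a).

(* (V,Q) = (V^star, Q^star):  V(s) = max_a Q(s,a) *)
Definition is_optimal_values (P : S -> A -> S -> R) (r : S -> A -> R) (gamma beta : R)
  (V : S -> R) (Q : S -> A -> R) : Prop :=
  (forall s, (forall a, Q s a <= V s) /\ (exists a, V s = Q s a)) /\
  (forall s a, Q s a = soft_Q P r gamma beta V s a).

Definition tilted_kernel (P : S -> A -> S -> R) (beta : R) (V : S -> R)
  (s : S) (a : A) (s' : S) : R :=
  P s a s' * expR (- (beta * V s')) /
  \sum_(s'' : S) P s a s'' * expR (- (beta * V s'')).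

(* law of s_t for s_0 ~ rho, a_t = pi(s_t), s_{t+1} ~ K(.|s_t,a_t) *)
Fixpoint state_law (rho : S -> R) (K : S -> A -> S -> R) (pi : S -> A) (t : nat)
  : S -> R :=
  match t with
  | O => rho
  | t'.+1 => fun s' => \sum_(s : S) state_law rho K pi t' s * K s (pi s) s'
  end.

End Defs.

From mathcomp Require Import all_boot all_order all_algebra.
From mathcomp Require Import all_classical all_reals all_analysis.
Import Order.TTheory GRing.Theory Num.Theory numFieldNormedType.Exports.
From mathcomp Require Import ring lra.
Local Open Scope ring_scope.
Local Open Scope classical_set_scope.

(* Write D = V* - V^{pi_Q} and K for the tilted kernel
   K(s'|s,a) ∝ P(s'|s,a) exp(-beta V^{pi_Q}(s')).
   1. Gibbs' variational inequality  E_w[x] <= ln E_w[e^x]  (for a finite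
      positive measure w) shows that the soft Bellman backup is "convex":
      softQ(V1)(s,a) - softQ(V2)(s,a) <= gamma E_{K_{V2}(.|s,a)}[V1 - V2].
   2. Combined with the greedy choices of pi* and pi_Q this gives the one-step
      inequality D(s) <= g(s) + gamma E_{K(.|s,pi_Q s)}[D], where g is the
      integrand of the theorem.
   3. Unrolling this inequality n times along the state laws of the chain
      driven by K and pi_Q gives E_rho[D] <= sum_{t<n} u_t + gamma^n E_n[D];
      since expectations of a fixed function are uniformly bounded, the
      series of the u_t converges geometrically and the remainder vanishes. *)

Section GibbsInequality.
Context {R : realType} {I : finType}.

Lemma ln_le_subr1 (y : R) : 0 < y -> ln y <= y - 1.
Proof.
move=> y_gt0; have := expR_ge1Dx (ln y).
by rewrite lnK ?posrE // lerBrDl.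
Qed.

Lemma wsum_pos_gt0 (w v : I -> R) :
  (forall i, 0 <= w i) -> 0 < \sum_i w i -> (forall i, 0 < v i) ->
  0 < \sum_i w i * v i.
Proof.
move=> w_ge0 Z_gt0 v_gt0.
have /hasP[i _ /= wi_gt0] : has (fun i => true && (0 < w i)) (index_enum I).
  by rewrite -psumr_neq0 ?gt_eqF.
rewrite (bigD1 i) //= ltr_pwDl ?mulr_gt0 //.
by rewrite sumr_ge0 // => j _; rewrite mulr_ge0 // ltW.
Qed.

(* Gibbs' variational inequality for a finite measure w of mass Z:
   E_w[x] <= Z * ln (E_w[e^x] / Z)  (Jensen for the convex exponential). *)
Lemma gibbs_ineq (w x : I -> R) :
  (forall i, 0 <= w i) -> 0 < \sum_i w i ->
  \sum_i w i * x i <=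
  (\sum_i w i) * (ln (\sum_i w i * expR (x i)) - ln (\sum_i w i)).
Proof.
move=> w_ge0 Z_gt0; set Z := \sum_i w i; set m := \sum_i w i * expR (x i).
have m_gt0 : 0 < m by apply: wsum_pos_gt0 => // i; exact: expR_gt0.
have pointwise i : w i * (x i + ln Z - ln m) <= w i * (expR (x i) * Z / m - 1).
  apply: ler_wpM2l => //; rewrite -[x i]expRK -lnM ?posrE ?expR_gt0 //.
  rewrite -lnV ?posrE // -lnM ?posrE ?invr_gt0 ?mulr_gt0 ?expR_gt0 //.
  by rewrite expRK ln_le_subr1 // mulr_gt0 ?invr_gt0 ?mulr_gt0 ?expR_gt0.
have : \sum_i w i * (x i + ln Z - ln m) <= \sum_i w i * (expR (x i) * Z / m - 1).
  by apply: ler_sum => i _; exact: pointwise.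
have -> : \sum_i w i * (expR (x i) * Z / m - 1) = Z / m * m - Z.
  by rewrite /m /Z mulr_sumr -sumrB; apply: eq_bigr => i _; ring.
have -> : \sum_i w i * (x i + ln Z - ln m) = \sum_i w i * x i + Z * (ln Z - ln m).
  by rewrite mulr_suml -big_split /=; apply: eq_bigr => i _; ring.
by rewrite divfK ?gt_eqF // subrr; lra.
Qed.

End GibbsInequality.

Section KernelsAndStateLaws.
Context {R : realType} {S A : finType}.
Implicit Types (P K : S -> A -> S -> R) (mu rho : S -> R) (pi : S -> A).

Lemma tilt_normalizer_gt0 {P} (beta : R) (V : S -> R) s a :
  is_kernel P -> 0 < \sum_(s' : S) P s a s' * expR (- (beta * V s')).
Proof.
move=> [P_ge0 P_sum1]; apply: wsum_pos_gt0 => // [|s']; last exact: expR_gt0.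
by rewrite P_sum1 ltr01.
Qed.

Lemma tilted_kernel_is_kernel P (beta : R) (V : S -> R) :
  is_kernel P -> is_kernel (tilted_kernel P beta V).
Proof.
move=> kP; have Z_gt0 s a := tilt_normalizer_gt0 beta V s a kP.
split=> [s a s'|s a]; rewrite /tilted_kernel.
  by rewrite divr_ge0 ?mulr_ge0 ?kP.1 // ltW // expR_gt0.
by rewrite -mulr_suml divff // gt_eqF.
Qed.

Lemma state_law_is_dist rho K pi t :
  is_dist rho -> is_kernel K -> is_dist (state_law rho K pi t).
Proof.
move=> rho_dist [K_ge0 K_sum1]; elim: t => [//|t [law_ge0 law_sum1]] /=.
split=> [s'|]; first by apply: sumr_ge0 => s _; rewrite mulr_ge0.
rewrite exchange_big /= -law_sum1; apply: eq_bigr => s _.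
by rewrite -mulr_sumr K_sum1 mulr1.
Qed.

Lemma state_law_succ_expectation rho K pi t (f : S -> R) :
  \sum_s state_law rho K pi t.+1 s * f s =
  \sum_s state_law rho K pi t s * \sum_s' K s (pi s) s' * f s'.
Proof.
under eq_bigr do rewrite /= mulr_suml.
rewrite exchange_big /=; apply: eq_bigr => s _; rewrite mulr_sumr.
by apply: eq_bigr => s' _; rewrite mulrA.
Qed.

Lemma expectation_norm_le mu (f : S -> R) :
  is_dist mu -> `|\sum_s mu s * f s| <= \sum_s `|f s|.
Proof.
move=> [mu_ge0 mu_sum1]; apply: le_trans (ler_norm_sum _ _ _) _.
apply: ler_sum => s _; rewrite normrM ger0_norm // ler_piMl //.
by rewrite -mu_sum1 (bigD1 s) //= lerDl sumr_ge0.
Qed.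

End KernelsAndStateLaws.

Section SoftBellmanBackup.
Context {R : realType} {S A : finType}.
Context {P : S -> A -> S -> R} (r : S -> A -> R) {gamma beta : R}.
Hypotheses (kP : is_kernel P) (gamma_ge0 : 0 <= gamma) (beta_gt0 : 0 < beta).

(* Convexity of the soft Bellman backup: its increment from V2 to V1 is at
   most the discounted expectation of V1 - V2 under the kernel tilted by V2
   (Gibbs' inequality with weights P(s'|s,a) exp(-beta V2 s')). *)
Lemma soft_Q_sub_le (V1 V2 : S -> R) s a :
  soft_Q P r gamma beta V1 s a - soft_Q P r gamma beta V2 s a <=
  gamma * \sum_s' tilted_kernel P beta V2 s a s' * (V1 s' - V2 s').
Proof.
set w := fun s' => P s a s' * expR (- (beta * V2 s')).
set Z2 := \sum_s' w s'; set Z1 := \sum_s' P s a s' * expR (- (beta * V1 s')).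
set E := \sum_s' tilted_kernel P beta V2 s a s' * (V1 s' - V2 s').
have Z2_gt0 : 0 < Z2 by exact: tilt_normalizer_gt0.
have w_ge0 s' : 0 <= w s' by rewrite mulr_ge0 ?kP.1 // ltW // expR_gt0.
have := gibbs_ineq w (fun s' => - (beta * (V1 s' - V2 s'))) w_ge0 Z2_gt0.
have -> : \sum_s' w s' * expR (- (beta * (V1 s' - V2 s'))) = Z1.
  by apply: eq_bigr => s' _; rewrite /w -mulrA -expRD; congr (_ * expR _); ring.
have -> : \sum_s' w s' * - (beta * (V1 s' - V2 s')) = - beta * Z2 * E.
  rewrite /E mulr_sumr; apply: eq_bigr => s' _; rewrite /tilted_kernel /w -/Z2.
  by field; rewrite gt_eqF.
rewrite -/Z2 => gibbs.
have ln_gap : ln Z2 - ln Z1 <= beta * E by rewrite -(ler_pM2l Z2_gt0); nra.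
have -> : gamma * E = gamma * beta^-1 * (beta * E) by field; rewrite gt_eqF.
rewrite /soft_Q -/Z1 -/Z2 [leRHS]mulrC; set c := gamma * beta^-1.
have c_ge0 : 0 <= c by rewrite mulr_ge0 // invr_ge0 ltW.
have := ler_wpM2l c_ge0 ln_gap; lra.
Qed.

End SoftBellmanBackup.

Definition discounted_term {R : realType} {S A : finType} (rho : S -> R)
    (K : S -> A -> S -> R) (pi : S -> A) (gamma : R) (f : S -> R) (t : nat) : R :=
  gamma ^+ t * \sum_s state_law rho K pi t s * f s.

Section UnrolledBellmanInequality.
Context {R : realType} {S A : finType}.
Context {rho : S -> R} {K : S -> A -> S -> R} {pol : S -> A} {gamma : R}.
Hypotheses (rho_dist : is_dist rho) (kK : is_kernel K).
Hypotheses (gamma_ge0 : 0 <= gamma) (gamma_lt1 : gamma < 1).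

Let law t := state_law rho K pol t.
Let law_dist t : is_dist (law t) := state_law_is_dist rho K pol t rho_dist kK.

(* Discounted sums of bounded rewards converge: the terms are dominated by
   the geometric sequence (sum_s |f s|) gamma^t. *)
Lemma discounted_series_cvg (f : S -> R) :
  cvgn (series (discounted_term rho K pol gamma f)).
Proof.
set C := \sum_s `|f s|.
have term_le t : `|discounted_term rho K pol gamma f t| <= geometric C gamma t.
  rewrite /discounted_term normrM ger0_norm ?exprn_ge0 //= mulrC.
  by rewrite ler_wpM2r ?exprn_ge0 // expectation_norm_le.
apply: normed_cvg; apply: (series_le_cvg _ _ term_le) => [t|t|] //=.
  by rewrite mulr_ge0 ?sumr_ge0 ?exprn_ge0.
by apply: is_cvg_geometric_series; rewrite ger0_norm.
Qed.

Context {D g : S -> R}.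
Hypothesis bellman_le :
  forall s, D s <= g s + gamma * \sum_s' K s (pol s) s' * D s'.

Lemma unrolled_bellman_le n :
  \sum_s rho s * D s <=
  series (discounted_term rho K pol gamma g) n + gamma ^+ n * \sum_s law n s * D s.
Proof.
elim: n => [|n IH]; first by rewrite seriesEnat /= big_geq // expr0 mul1r add0r.
rewrite seriesSr /discounted_term -/(law n) -/(law n.+1).
rewrite /law state_law_succ_expectation -/(law n).
set X := \sum_s law n s * \sum_s' K s (pol s) s' * D s'.
have one_step : \sum_s law n s * D s <= \sum_s law n s * g s + gamma * X.
  rewrite /X mulr_sumr -big_split /=; apply: ler_sum => s _.
  by rewrite mulrCA -mulrDr; apply: ler_wpM2l; [exact: (law_dist n).1|].
have := ler_wpM2l (exprn_ge0 n gamma_ge0) one_step.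
rewrite exprS; lra.
Qed.

(* Letting n go to infinity: the remainder gamma^n E_n[D] vanishes. *)
Lemma unrolled_bellman_lim :
  \sum_s rho s * D s <= limn (series (discounted_term rho K pol gamma g)).
Proof.
set M := \sum_s `|D s|.
have lim_bound : series (discounted_term rho K pol gamma g) n + M * gamma ^+ n
    @[n --> \oo] --> limn (series (discounted_term rho K pol gamma g)) + M * 0.
  apply: cvgD; first exact: discounted_series_cvg.
  by apply: cvgMl_tmp; apply: cvg_expr; rewrite ger0_norm.
rewrite mulr0 addr0 in lim_bound; apply: (cvgr_to_ge lim_bound).
apply: nearW => n /=; apply: le_trans (unrolled_bellman_le n) _.
rewrite lerD2l mulrC; apply: ler_wpM2r; first exact: exprn_ge0.
exact: le_trans (ler_norm _) (expectation_norm_le (law n) D (law_dist n)).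
Qed.

End UnrolledBellmanInequality.

Theorem mainTheorem12 (R : realType) (S A : finType)
  (P : S -> A -> S -> R) (r : S -> A -> R) (gamma beta : R) (rho : S -> R)
  (Vstar : S -> R) (Qstar : S -> A -> R) (piStar : S -> A)
  (Q : S -> A -> R) (piQ : S -> A) (VpiQ : S -> R) (QpiQ : S -> A -> R) :
  is_kernel P ->
  (forall s a, 0 <= r s a <= 1) ->
  0 <= gamma < 1 ->
  0 < beta ->
  is_dist rho ->
  is_optimal_values P r gamma beta Vstar Qstar ->
  (forall s a, Qstar s a <= Qstar s (piStar s)) ->
  (forall s a, Q s a <= Q s (piQ s)) ->
  is_policy_values P r gamma beta piQ VpiQ QpiQ ->
  let u := fun t : nat =>
    gamma ^+ t * \sum_(s : S)
      state_law rho (tilted_kernel P beta VpiQ) piQ t s *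
      ((Qstar s (piStar s) - Q s (piStar s)) + (Q s (piQ s) - Qstar s (piQ s))) in
  cvgn (series u) /\
  \sum_(s : S) rho s * (Vstar s - VpiQ s) <= limn (series u).
Proof.
move=> kP _ /andP[gamma_ge0 gamma_lt1] beta_gt0 rho_dist [Vstar_max Qstar_def]
  piStar_greedy piQ_greedy [VpiQ_def QpiQ_def] u.
set K := tilted_kernel P beta VpiQ.
have kK : is_kernel K by exact: tilted_kernel_is_kernel.
have Vstar_def s : Vstar s = Qstar s (piStar s).
  have [Q_le_V [a Va]] := Vstar_max s; rewrite Va in Q_le_V *.
  by apply/eqP; rewrite eq_le piStar_greedy Q_le_V.
(* One-step performance difference: switching from pi* to pi_Q costs at most
   the integrand (greediness of pi_Q for Q), plus the discounted tilted
   expectation of the value gap (convexity of the soft backup). *)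
have bellman_step s : Vstar s - VpiQ s <=
    ((Qstar s (piStar s) - Q s (piStar s)) + (Q s (piQ s) - Qstar s (piQ s)))
    + gamma * \sum_s' K s (piQ s) s' * (Vstar s' - VpiQ s').
  have := soft_Q_sub_le r kP gamma_ge0 beta_gt0 Vstar VpiQ s (piQ s).
  rewrite -Qstar_def -QpiQ_def => soft_gap.
  have := piQ_greedy s (piStar s); rewrite Vstar_def VpiQ_def; lra.
pose g s := (Qstar s (piStar s) - Q s (piStar s)) + (Q s (piQ s) - Qstar s (piQ s)).
have -> : u = discounted_term rho K piQ gamma g by [].
split; first exact: discounted_series_cvg rho_dist kK gamma_ge0 gamma_lt1 g.
exact (unrolled_bellman_lim rho_dist kK gamma_ge0 gamma_lt1 bellman_step).
Qed.
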